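(* Let $k>2$, $n\ge1$, and let $\sigma:Z_k\to Z_k$ be a map. Define $\psi_\sigma:P_k^n\to P_k^n$ by $\psi_\sigma(f)(\bar a)=\sigma(f(\bar a))$ for all $\bar a\in Z_k^n$. Then $f\simeq_{cmr}\psi_\sigma(f)$ for all $f\in P_k^n$ if and only if $\sigma$ is a permutation of $Z_k$.
   Context: $Z_k=\{0,\dots,k-1\}$; $P_k^n$ is the set of all maps $Z_k^n\to Z_k$ in variables $x_1,\dots,x_n$. $x_i$ is essential in $f$ if changing only the $i$-th argument can change the value of $f$; $Ess(f)$, $ess(f)=|Ess(f)|$. For distinct essential $x_i,x_j$, $f_{i\leftarrow j}(a_1,\dots,a_n)=f(a_1,\dots,a_{i-1},a_j,a_{i+1},\dots,a_n)$. The relation $f\simeq_{cmr}g$ is defined recursively: if $ess(f)\le1$ it means $ess(f)=ess(g)$; if $ess(f)\ge2$ it means $ess(f)=ess(g)$ and there is a permutation $\sigma'$ of $\{1,\dots,n\}$ with $f_{i\leftarrow j}\simeq_{cmr} g_{\sigma'(i)\leftarrow\sigma'(j)}$ for all $j<i$ with $x_i,x_j\in Ess(f)$. *)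

From mathcomp Require Import all_boot all_fingroup.
Set Implicit Arguments. Unset Strict Implicit. Unset Printing Implicit Defensive.

(* Z_k = 'I_k ; Z_k^n = {ffun 'I_n -> 'I_k} ; P_k^n = functions Z_k^n -> Z_k *)
Definition tup (k n : nat) := {ffun 'I_n -> 'I_k}.
Definition fn (k n : nat) := tup k n -> 'I_k.

Definition essential k n (f : fn k n) (i : 'I_n) : bool :=
  [exists a : tup k n, exists b : tup k n,
     [forall j, (j != i) ==> (a j == b j)] && (f a != f b)].

Definition Ess k n (f : fn k n) : {set 'I_n} := [set i | essential f i].
Definition ess k n (f : fn k n) : nat := #|Ess f|.

Definition ident k n (f : fn k n) (i j : 'I_n) : fn k n :=
  fun a => f [ffun l => if l == i then a j else a l].

Inductive cmr k n : fn k n -> fn k n -> Prop :=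
| cmr_base (f g : fn k n) :
    ess f <= 1 -> ess f = ess g -> cmr f g
| cmr_step (f g : fn k n) :
    2 <= ess f -> ess f = ess g ->
    (exists s : {perm 'I_n}, forall i j : 'I_n,
        j < i -> essential f i -> essential f j ->
        cmr (ident f i j) (ident g (s i) (s j))) ->
    cmr f g.

Definition psi k n (sigma : 'I_k -> 'I_k) (f : fn k n) : fn k n :=
  fun a => sigma (f a).

From mathcomp Require Import all_boot all_fingroup.
Set Implicit Arguments. Unset Strict Implicit. Unset Printing Implicit Defensive.

(* If sigma is injective, psi_sigma f has exactly the essential variables of f
   and commutes with every identification of variables, so f ~cmr psi_sigma f
   by induction on ess f, taking the identity permutation at each step.  If
   sigma u = sigma v with u <> v, the function equal to u when x_1 = u and to
   v otherwise depends on x_1, but its image under psi_sigma is constant; the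
   two then differ in ess, which ~cmr preserves. *)

Lemma cmr_ess k n (f g : fn k n) : cmr f g -> ess f = ess g.
Proof. by case. Qed.

Section Essential.

Variables k n : nat.
Implicit Types (f : fn k n) (i j : 'I_n).

Lemma essential_psi (sigma : 'I_k -> 'I_k) f i :
  injective sigma -> essential (psi sigma f) i = essential f i.
Proof.
move=> inj_sigma; apply/existsP/existsP => -[a /existsP [b /andP [ab fab]]];
  exists a; apply/existsP; exists b; rewrite ab /=.
- by rewrite /psi (inj_eq inj_sigma) in fab.
- by rewrite /psi (inj_eq inj_sigma).
Qed.

Lemma ess_psi (sigma : 'I_k -> 'I_k) f :
  injective sigma -> ess (psi sigma f) = ess f.
Proof. by move=> inj_sigma; apply: eq_card => i; rewrite !inE essential_psi. Qed.

Lemma psi_ident (sigma : 'I_k -> 'I_k) f i j :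
  ident (psi sigma f) i j = psi sigma (ident f i j).
Proof. by []. Qed.

Lemma essential_const f i : (forall a b, f a = f b) -> essential f i = false.
Proof.
move=> fconst; apply/negbTE/existsP => -[a /existsP [b /andP [_]]].
by rewrite (fconst a b) eqxx.
Qed.

Lemma Ess_ident f i j :
  j != i -> essential f j -> Ess (ident f i j) \subset Ess f :\ i.
Proof.
move=> ji Ej; apply/subsetP => l.
rewrite !inE => /existsP [a /existsP [b /andP [/forallP ab fab]]].
have agree m : m != l -> a m = b m by move=> ml; apply/eqP/(implyP (ab m)).
have li : l != i.
  apply: contraTneq fab => l_i; rewrite negbK; apply/eqP; congr f; apply/ffunP => m; rewrite !ffunE.
  by case: eqP => [_|/eqP mi]; apply: agree; rewrite l_i // eq_sym.
rewrite li /=; case: (l =P j) => [->//|/eqP lj].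
apply/existsP; exists [ffun m => if m == i then a j else a m].
apply/existsP; exists [ffun m => if m == i then b j else b m].
rewrite fab andbT; apply/forallP => m; apply/implyP => ml; rewrite !ffunE.
by case: (m =P i) => _; rewrite agree // eq_sym.
Qed.

Lemma ess_ident_lt f i j :
  j != i -> essential f i -> essential f j -> ess (ident f i j) < ess f.
Proof.
move=> ji Ei Ej; apply: leq_ltn_trans (subset_leq_card (Ess_ident ji Ej)) _.
by rewrite [ess f](cardsD1 i) inE Ei.
Qed.

Definition switch i0 (u v : 'I_k) : fn k n := fun a => if a i0 == u then u else v.

Lemma essential_switch i0 (u v : 'I_k) : u != v -> essential (switch i0 u v) i0.
Proof.
move=> uv; apply/existsP; exists [ffun _ => u].
apply/existsP; exists [ffun m => if m == i0 then v else u].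
rewrite /switch !ffunE !eqxx (eq_sym v u) (negbTE uv) uv andbT.
by apply/forallP => m; apply/implyP => /negbTE mi; rewrite !ffunE mi.
Qed.

End Essential.

Lemma cmr_psi_of_injective k n (sigma : 'I_k -> 'I_k) (f : fn k n) :
  injective sigma -> cmr f (psi sigma f).
Proof.
move=> inj_sigma; have [m] := ubnP (ess f); elim: m f => // m IH f.
rewrite ltnS => ess_f_le; have [ess_f_le1|ess_f_gt1] := leqP (ess f) 1.
  by apply: cmr_base; rewrite ?ess_psi.
apply: cmr_step; rewrite ?ess_psi //.
exists 1%g => i j ji Ei Ej; rewrite !perm1 psi_ident.
apply: IH; apply: leq_trans ess_f_le.
by apply: ess_ident_lt; rewrite // neq_ltn ji.
Qed.

Lemma injective_of_cmr_psi k n (sigma : 'I_k -> 'I_k) :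
  0 < n -> (forall f : fn k n, cmr f (psi sigma f)) -> injective sigma.
Proof.
move=> n_gt0 cmr_psi u v suv; apply/eqP/negP => /negP uv.
pose i0 : 'I_n := Ordinal n_gt0.
have Ess_psi0 : Ess (psi sigma (switch i0 u v)) = set0.
  apply/setP => i; rewrite !inE essential_const // => a b.
  by rewrite /psi /switch; case: ifP; case: ifP.
have := cmr_ess (cmr_psi (switch i0 u v)).
rewrite /ess Ess_psi0 cards0 => /eqP; rewrite cards_eq0 => /eqP Ess0.
have : i0 \in Ess (switch i0 u v) by rewrite inE essential_switch.
by rewrite Ess0 inE.
Qed.

Theorem theorem17 (k n : nat) (hk : 2 < k) (hn : 1 <= n)
  (sigma : 'I_k -> 'I_k) :
  (forall f : fn k n, cmr f (psi sigma f)) <-> bijective sigma.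
Proof.
split=> [cmr_psi | bij_sigma].
- exact/injF_bij/(injective_of_cmr_psi hn).
- by move=> f; apply/cmr_psi_of_injective/bij_inj.
Qed.
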